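(* Let $n\ge 2$ and $F_n=\langle x_1,\dots,x_n\rangle$. Let $S=\{x_jx_ix_j^{-1},\ x_j^{-1}x_ix_j : i,j\in\{1,\dots,n\},\ i\ne j\}$ (a set of $2n(n-1)$ elements), let $G=\langle S\rangle$, and for each $s\in S$ let $G_s=\langle S\setminus\{s\}\rangle$. Then the coset incidence system $\Gamma=\Gamma(G;(G_s)_{s\in S})$ is a residually connected and flag-transitive geometry. Moreover, the group $K=\langle\phi_1,\phi_\rho,\phi_\tau\rangle\le\mathrm{Aut}(F_n)$, where $\phi_1(x_1,\dots,x_n)=(x_1^{-1},x_2,\dots,x_n)$, $\phi_\rho(x_1,\dots,x_n)=(x_2,\dots,x_n,x_1)$ and $\phi_\tau(x_1,\dots,x_n)=(x_2,x_1,x_3,\dots,x_n)$ (so $K\cong C_2^n\rtimes\mathrm{Sym}(n)$), acts on $\Gamma$ as a group of correlations: each $\phi\in K$ satisfies $\phi(G)=G$, permutes the subgroups $G_s$, and induces the correlation $G_sg\mapsto \phi(G_s)\phi(g)$ of $\Gamma$.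
   Context: An incidence system is a quadruple $\Gamma=(X,*,t,I)$ with $X$ a set, $I$ a finite type set, $t:X\to I$ surjective, and $*$ a symmetric relation with no two elements of the same type incident. A flag is a set of pairwise incident elements; a chamber is a flag containing an element of each type; $\Gamma$ is a geometry if every flag is contained in a chamber. The residue of a flag $F$ is the incidence system (induced types and incidence) of elements not in $F$ incident with all elements of $F$. A geometry is residually connected if the incidence graph of every residue of rank at least two is connected (the residue of the empty flag is $\Gamma$ itself). A correlation of $\Gamma$ is a permutation $\alpha$ of $X$ with $t(x)=t(y)\iff t(\alpha x)=t(\alpha y)$ and $x*y\iff \alpha x*\alpha y$. Coset incidence system: for a group $G$ with subgroups $(G_i)_{i\in I}$, $\Gamma(G;(G_i)_{i\in I})$ has elements the right cosets $G_ig$, type $t(G_ig)=i$, and $G_ig_1*G_jg_2$ iff $G_ig_1\cap G_jg_2\ne\emptyset$; $G$ acts by right multiplication. It is flag-transitive if $G$ is transitive on the flags of type $J$ for every $J\subseteq I$. *)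

From mathcomp Require Import all_boot.
From mathcomp Require Import perm.
From Stdlib Require Import Relation_Operators.

Set Implicit Arguments.
Unset Strict Implicit.
Unset Printing Implicit Defensive.

(* Generator x_{i+1} is the letter (i, false); its inverse is (i, true).     *)

Definition letter (n : nat) := ('I_n * bool)%type.

Definition flip n (a : letter n) : letter n := (a.1, ~~ a.2).

Definition reduced n (w : seq (letter n)) : bool :=
  sorted (fun a b => b != flip a) w.

Definition push n (a : letter n) (s : seq (letter n)) : seq (letter n) :=
  if s is b :: s' then (if b == flip a then s' else a :: s) else [:: a].

Definition reduce n (w : seq (letter n)) : seq (letter n) := foldr (@push n) [::] w.

Lemma reduce_reduced n (w : seq (letter n)) : reduced (reduce w).
Proof.
elim: w => [|a w IH] //=.
rewrite /push; case E: (reduce w) => [|b s] //=.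
case: ifP => Hb.
  by move: IH; rewrite E /reduced /=; case: s {E} => //= c s /andP [].
by move: IH; rewrite E /reduced /= Hb.
Qed.

Definition FG (n : nat) := {w : seq (letter n) | reduced w}.

Definition fmul n (u v : FG n) : FG n :=
  exist _ (reduce (sval u ++ sval v)) (reduce_reduced _).
Definition finv n (u : FG n) : FG n :=
  exist _ (reduce (rev (map (@flip n) (sval u)))) (reduce_reduced _).
Definition fone n : FG n := exist _ [::] isT.

Definition xgen n (k : nat) : FG n :=
  match insub k with
  | Some i => exist _ [:: (i, false)] isT
  | None => fone n
  end.

Definition ext n (f : 'I_n -> FG n) (w : FG n) : FG n :=
  foldr (fun a acc => fmul (if a.2 then finv (f a.1) else f a.1) acc)
        (fone n) (sval w).

Inductive gen n (A : FG n -> Prop) : FG n -> Prop :=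
| gen_in x : A x -> gen A x
| gen_one : gen A (fone n)
| gen_mul x y : gen A x -> gen A y -> gen A (fmul x y)
| gen_inv x : gen A x -> gen A (finv x).

Definition rcoset n (H : FG n -> Prop) (g : FG n) : FG n -> Prop :=
  fun x => exists h, H h /\ x = fmul h g.

Definition fimg n (phi : FG n -> FG n) (A : FG n -> Prop) : FG n -> Prop :=
  fun y => exists x, A x /\ y = phi x.

(* The set S, indexed by triples (i, j, b) with i <> j:                      *)
(* (this indexing is a bijection onto S, which has 2n(n-1) elements).        *)

Definition sidx (n : nat) := {p : 'I_n * 'I_n * bool | p.1.1 != p.1.2}.

Definition gx n (i : 'I_n) : FG n := exist _ [:: (i, false)] isT.

Definition selt n (s : sidx n) : FG n :=
  let: (i, j, b) := sval s in
  if b then fmul (finv (gx j)) (fmul (gx i) (gx j))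
  else fmul (gx j) (fmul (gx i) (finv (gx j))).

Definition Sset n : FG n -> Prop := fun x => exists s : sidx n, x = selt s.

Definition Ggrp n : FG n -> Prop := gen (@Sset n).

Definition Gsub n (s : sidx n) : FG n -> Prop :=
  gen (fun x => Sset x /\ x <> selt s).

Definition coset_elt n (I : Type) (G : FG n -> Prop) (H : I -> FG n -> Prop) :=
  {p : I * (FG n -> Prop) | exists g, G g /\ p.2 = rcoset (H p.1) g}.

Definition ctyp n I G H (x : @coset_elt n I G H) : I := (sval x).1.
Definition ccos n I G H (x : @coset_elt n I G H) : FG n -> Prop := (sval x).2.

Definition cinc n I G H (x y : @coset_elt n I G H) : Prop :=
  ctyp x <> ctyp y /\ exists z, ccos x z /\ ccos y z.

Section Incidence.
Variables (X I : Type) (typ : X -> I) (inc : X -> X -> Prop).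

Definition is_flag (F : X -> Prop) : Prop :=
  forall x y, F x -> F y -> x <> y -> inc x y.

Definition is_chamber (F : X -> Prop) : Prop :=
  is_flag F /\ forall i, exists x, F x /\ typ x = i.

Definition is_geometry : Prop :=
  forall F, is_flag F -> exists C, is_chamber C /\ forall x, F x -> C x.

Definition ftypes (F : X -> Prop) (i : I) : Prop := exists x, F x /\ typ x = i.

Definition residue (F : X -> Prop) (x : X) : Prop :=
  ~ F x /\ forall y, F y -> inc x y.

(* the residue of F has rank >= 2 (its type set is I minus the types of F) *)
Definition residue_rank_ge2 (F : X -> Prop) : Prop :=
  exists i j, i <> j /\ ~ ftypes F i /\ ~ ftypes F j.

Definition residue_connected (F : X -> Prop) : Prop :=
  forall x y, residue F x -> residue F y ->
    clos_refl_trans X (fun a b => residue F a /\ residue F b /\ inc a b) x y.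

Definition residually_connected : Prop :=
  forall F, is_flag F -> residue_rank_ge2 F -> residue_connected F.

Definition is_correlation (alpha : X -> X) : Prop :=
  bijective alpha /\
  (forall x y, typ x = typ y <-> typ (alpha x) = typ (alpha y)) /\
  (forall x y, inc x y <-> inc (alpha x) (alpha y)).

End Incidence.

Definition rshift n (C : FG n -> Prop) (h : FG n) : FG n -> Prop :=
  fun z => exists c, C c /\ z = fmul c h.

Definition flag_transitive n I (G : FG n -> Prop) (H : I -> FG n -> Prop) : Prop :=
  forall F1 F2 : @coset_elt n I G H -> Prop,
    is_flag (@cinc n I G H) F1 -> is_flag (@cinc n I G H) F2 ->
    (forall i, ftypes (@ctyp n I G H) F1 i <-> ftypes (@ctyp n I G H) F2 i) ->
    exists h, G h /\
      forall x y, F1 x -> F2 y -> ctyp x = ctyp y -> ccos y = rshift (ccos x) h.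

Definition phi1 n : FG n -> FG n :=
  ext (fun i : 'I_n => if val i == 0 then finv (gx i) else gx i).
Definition phirho n : FG n -> FG n :=
  ext (fun i : 'I_n => xgen n ((val i).+1 %% n)).
Definition phitau n : FG n -> FG n :=
  ext (fun i : 'I_n => xgen n (if val i == 0 then 1 else if val i == 1 then 0 else val i)).

Inductive Kgrp n : (FG n -> FG n) -> Prop :=
| K_phi1 : Kgrp (@phi1 n)
| K_phirho : Kgrp (@phirho n)
| K_phitau : Kgrp (@phitau n)
| K_id : Kgrp id
| K_comp f g : Kgrp f -> Kgrp g -> Kgrp (f \o g)
| K_inv f g : Kgrp f -> cancel f g -> cancel g f -> Kgrp g.

(* The elements of S freely generate G: in the reduced spelling of a reduced
   word in S^{+-1}, cancellation between consecutive conjugates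
   x_j^{-+1} x_i^e x_j^{+-1} never reaches their middle letters, so the S-word
   can be read back. Hence G is free on S and G_s is the free factor on
   S \ {s}. For free factors, if b lies in G_i G_s for several s, a single u in
   G_i (cancelling the part of the S-word of b before its first letter of type i)
   puts u b into all these G_s at once; by induction on the types, every flag
   lies in the chamber {G_t g} of one g, which gives both the geometry axiom and
   flag-transitivity. An element of the residue of such a flag is G_t (w g) for
   an S-word w avoiding the types of the flag; walking along w, through cosets
   of a free type different from the current letter (two free types leave room),
   connects it to a fixed element of the residue. Finally every element of K
   maps S onto S^{+-1} through a permutation of S, so it preserves G, permutes
   the G_s and acts on cosets as a correlation. *)

From mathcomp Require Import all_boot perm.
From Stdlib Require Import FunctionalExtensionality PropExtensionality ProofIrrelevance Classical.
From Stdlib Require Import Relation_Operators.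
From Pilot Require Import Defs.

Set Implicit Arguments.
Unset Strict Implicit.
Unset Printing Implicit Defensive.

(* Free reduction over an arbitrary alphabet: [reduce] of Defs is its instance
   for the letters of F_n, and words over S^{+-1} are reduced as well. *)
Section WordReduction.

Variable A : eqType.
Implicit Types (a b : A * bool) (s u v w : seq (A * bool)).

Definition wflip a : A * bool := (a.1, ~~ a.2).
Definition wreduced w : bool := sorted (fun a b => b != wflip a) w.
Definition wpush a s : seq (A * bool) :=
  if s is b :: s' then (if b == wflip a then s' else a :: s) else [:: a].
Definition wreduce w : seq (A * bool) := foldr wpush [::] w.
Definition winv w : seq (A * bool) := rev (map wflip w).

Lemma wflipK : involutive wflip.
Proof. by case=> a b; rewrite /wflip /= negbK. Qed.

Lemma wreduced_cons a s :
  wreduced (a :: s) = (if s is b :: _ then b != wflip a else true) && wreduced s.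
Proof. by case: s. Qed.

Lemma wreduced_behead a s : wreduced (a :: s) -> wreduced s.
Proof. by rewrite wreduced_cons => /andP []. Qed.

Lemma wreduced_push a s : wreduced s -> wreduced (wpush a s).
Proof.
case: s => [|b s] //= Hs; case: ifP => Hb; last by rewrite wreduced_cons Hb.
by case: s Hs => //= c s /andP [].
Qed.

Lemma wreduced_foldr s r : wreduced s -> wreduced (foldr wpush s r).
Proof. by move=> Hs; elim: r => //= a r IH; apply: wreduced_push. Qed.

Lemma wreduced_reduce w : wreduced (wreduce w).
Proof. exact: wreduced_foldr. Qed.

Lemma wreduce_id w : wreduced w -> wreduce w = w.
Proof.
elim: w => // a w IH Hw.
rewrite [wreduce _]/= -/(wreduce w) IH ?(wreduced_behead Hw) //.
by move: Hw; rewrite wreduced_cons; case: w {IH} => //= b w /andP [/negbTE ->].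
Qed.

Lemma wpushK a s : wreduced s -> wpush (wflip a) (wpush a s) = s.
Proof.
case: s => [|b s] /=; first by rewrite wflipK eqxx.
case: ifP => [/eqP -> |Hb] Hs; last by rewrite /= wflipK eqxx.
by case: s Hs => //= c s /andP [/negbTE ->].
Qed.

Lemma wpushKV a s : wreduced s -> wpush a (wpush (wflip a) s) = s.
Proof. by move=> Hs; rewrite -{1}(wflipK a) wpushK. Qed.

Lemma wpush_inj a s s' : wreduced s -> wreduced s' -> wpush a s = wpush a s' -> s = s'.
Proof. by move=> Hs Hs' E; rewrite -(wpushK a Hs) E wpushK. Qed.

Lemma foldr_wpush a s r : wreduced s ->
  foldr wpush s (wpush a r) = wpush a (foldr wpush s r).
Proof.
move=> Hs; case: r => [|b r] //=; case: ifP => // /eqP ->.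
by rewrite wpushKV // wreduced_foldr.
Qed.

Lemma foldr_wreduce s u : wreduced s -> foldr wpush s (wreduce u) = foldr wpush s u.
Proof. by move=> Hs; elim: u => //= a u IH; rewrite foldr_wpush // IH. Qed.

Lemma wreduce_cat u v : wreduce (u ++ v) = foldr wpush (wreduce v) u.
Proof. by rewrite /wreduce foldr_cat. Qed.

Lemma wreduce_catl u v : wreduce (u ++ v) = wreduce (wreduce u ++ v).
Proof. by rewrite !wreduce_cat foldr_wreduce // wreduced_reduce. Qed.

Lemma wreduce_catr u v : wreduce (u ++ v) = wreduce (u ++ wreduce v).
Proof. by rewrite !wreduce_cat (wreduce_id (wreduced_reduce v)). Qed.

Lemma winvK : involutive winv.
Proof. by move=> w; rewrite /winv map_rev revK -map_comp (eq_map wflipK) map_id. Qed.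

Lemma wreduce_catK w x : wreduce (w ++ winv w ++ x) = wreduce x.
Proof.
rewrite catA wreduce_cat; have := wreduced_reduce x.
elim: w (wreduce x) => //= a w IH s Hs.
rewrite /winv map_cons rev_cons -cats1 catA foldr_cat /=.
by rewrite IH ?wpushKV // wreduced_push.
Qed.

Lemma wreduce_catVK w x : wreduce (winv w ++ w ++ x) = wreduce x.
Proof. by rewrite -{2}(winvK w) wreduce_catK. Qed.

Lemma all_wreduce (P : pred (A * bool)) w : all P w -> all P (wreduce w).
Proof.
elim: w => //= a w IH /andP [Pa /IH]; rewrite -/(wreduce w).
case: (wreduce w) => [|b s] /=; first by rewrite Pa.
by case: ifP => _ /=; [case/andP|rewrite Pa].
Qed.

(* [foldr wpush q p] reduces [p ++ q] for reduced q: cancellation only eats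
   into p and q at the junction. *)
Lemma foldr_wpush_split (P Q : pred (A * bool)) p q : all P p -> all Q q ->
  exists p1 q1, [/\ foldr wpush q p = p1 ++ q1, all P p1 & all Q q1].
Proof.
move=> Hp Hq; elim: p Hp => [|a p IH] /=; first by exists [::], q.
case/andP => Pa /IH [p1 [q1 [-> H1 H2]]].
case: p1 H1 => [|b p1] H1 /=.
  case: q1 H2 => [|c q1] H2 /=; first by exists [:: a], [::]; rewrite /= Pa.
  case: ifP => _; first by exists [::], q1; case/andP: H2.
  by exists [:: a], (c :: q1); rewrite /= Pa.
case: ifP => _; first by exists p1, q1; case/andP: H1.
by exists (a :: b :: p1), q1; rewrite /= Pa.
Qed.

End WordReduction.

Section FreeGroup.

Variable n : nat.
Implicit Types (a b c : FG n).

Lemma reduceE (w : seq (letter n)) : reduce w = wreduce w.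
Proof. by []. Qed.

Lemma FG_inj a b : sval a = sval b -> a = b.
Proof. by case: a b => u Hu [v Hv] /= E; subst; congr exist; apply: bool_irrelevance. Qed.

Lemma FG_reduced a : wreduced (sval a).
Proof. exact: (svalP a). Qed.

Lemma fmulA a b c : fmul (fmul a b) c = fmul a (fmul b c).
Proof. by apply: FG_inj; rewrite /= !reduceE -wreduce_catl -wreduce_catr catA. Qed.

Lemma fmul1g a : fmul (fone n) a = a.
Proof. by apply: FG_inj; rewrite /= reduceE wreduce_id // FG_reduced. Qed.

Lemma fmulg1 a : fmul a (fone n) = a.
Proof. by apply: FG_inj; rewrite /= reduceE cats0 wreduce_id // FG_reduced. Qed.

Lemma fmulVg a : fmul (finv a) a = fone n.
Proof.
apply: FG_inj; rewrite /= !reduceE -wreduce_catl.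
by have := wreduce_catVK (sval a) [::]; rewrite cats0.
Qed.

Lemma fmulgV a : fmul a (finv a) = fone n.
Proof.
apply: FG_inj; rewrite /= !reduceE -wreduce_catr.
by have := wreduce_catK (sval a) [::]; rewrite cats0.
Qed.

Lemma fmulKg a b : fmul (finv a) (fmul a b) = b.
Proof. by rewrite -fmulA fmulVg fmul1g. Qed.

Lemma fmulKVg a b : fmul a (fmul (finv a) b) = b.
Proof. by rewrite -fmulA fmulgV fmul1g. Qed.

Lemma fmulgK a b : fmul (fmul b a) (finv a) = b.
Proof. by rewrite fmulA fmulgV fmulg1. Qed.

Lemma fmulgKV a b : fmul (fmul b (finv a)) a = b.
Proof. by rewrite fmulA fmulVg fmulg1. Qed.

Lemma finv_unique a b : fmul a b = fone n -> finv a = b.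
Proof. by move=> E; rewrite -(fmulg1 (finv a)) -E fmulKg. Qed.

Lemma finvK : involutive (@finv n).
Proof. by move=> a; apply: finv_unique; rewrite fmulVg. Qed.

Lemma finvM a b : finv (fmul a b) = fmul (finv b) (finv a).
Proof. by apply: finv_unique; rewrite fmulA fmulKVg fmulgV. Qed.

Lemma fmulI a : injective (fmul a).
Proof. by move=> b c E; rewrite -(fmulKg a b) E fmulKg. Qed.

End FreeGroup.

Section Cosets.

Variable n : nat.
Implicit Types (A B : FG n -> Prop) (g h : FG n).

Lemma gen_subset A B : (forall x, A x -> gen B x) -> forall x, gen A x -> gen B x.
Proof. by move=> AB x; elim=> {x} [x /AB //|||]; constructor. Qed.

Lemma gen_invE A h : gen A (finv h) -> gen A h.
Proof. by rewrite -{2}(finvK h); apply: gen_inv. Qed.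

Lemma rcoset_self A g : rcoset (gen A) g g.
Proof. by exists (fone n); split; [apply: gen_one|rewrite fmul1g]. Qed.

Lemma rcosetMl A h g : gen A h -> rcoset (gen A) (fmul h g) = rcoset (gen A) g.
Proof.
move=> Ah; apply: functional_extensionality => x; apply: propositional_extensionality.
split=> -[k [Ak ->]].
  by exists (fmul k h); split; [apply: gen_mul|rewrite fmulA].
by exists (fmul k (finv h)); split; [apply: gen_mul => //; apply: gen_inv|rewrite fmulA fmulKg].
Qed.

Lemma eq_rcoset A g h : rcoset (gen A) g = rcoset (gen A) h -> gen A (fmul g (finv h)).
Proof. by move=> E; have := rcoset_self A g; rewrite E => -[k [Ak ->]]; rewrite fmulgK. Qed.

Lemma rshift_rcoset (H : FG n -> Prop) g h : rshift (rcoset H g) h = rcoset H (fmul g h).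
Proof.
apply: functional_extensionality => x; apply: propositional_extensionality; split.
  by case=> _ [[k [Hk ->]] ->]; exists k; rewrite fmulA.
by case=> k [Hk ->]; exists (fmul k g); split; [exists k|rewrite fmulA].
Qed.

End Cosets.

Section FreeBasis.

Variable n : nat.
Implicit Types (s t : sidx n) (a : sidx n * bool) (u v w : seq (sidx n * bool)).

Definition sconj a : letter n := ((sval a.1).1.2, (sval a.1).2).
Definition smid a : letter n := ((sval a.1).1.1, a.2).
Definition spell1 a : seq (letter n) := [:: sconj a; smid a; wflip (sconj a)].
Definition spell w : seq (letter n) := flatten (map spell1 w).
Definition seval w : FG n := exist _ (reduce (spell w)) (reduce_reduced _).

Lemma letter_eqF (x y : letter n) : x.1 != y.1 -> (x == y) = false.
Proof. by case: x y => ? ? [? ?] /= /negbTE; rewrite xpair_eqE => ->. Qed.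

Lemma spell_cat u v : spell (u ++ v) = spell u ++ spell v.
Proof. by rewrite /spell map_cat flatten_cat. Qed.

Lemma seval_cat u v : seval (u ++ v) = fmul (seval u) (seval v).
Proof. by apply: FG_inj; rewrite /= !reduceE spell_cat wreduce_catl wreduce_catr. Qed.

Lemma seval_nil : seval [::] = fone n.
Proof. exact: FG_inj. Qed.

Lemma spell1_flip a : spell1 (wflip a) = winv (spell1 a).
Proof. by case: a => s e; rewrite /spell1 /winv /sconj /smid /= wflipK. Qed.

Lemma seval_reduce w : seval (wreduce w) = seval w.
Proof.
apply: FG_inj; elim: w => // a w IH.
change (wreduce (spell (wpush a (wreduce w))) = wreduce (spell1 a ++ spell w)).
rewrite wreduce_catr -[wreduce (spell w)]IH -wreduce_catr.
case: (wreduce w) => [|b r] //; rewrite /wpush; case: ifP => // /eqP ->.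
change (spell (wflip a :: r)) with (spell1 (wflip a) ++ spell r).
by rewrite spell1_flip wreduce_catK.
Qed.

Lemma seval_winv w : finv (seval w) = seval (winv w).
Proof.
apply: finv_unique; rewrite -seval_cat -seval_reduce.
by have := wreduce_catK w [::]; rewrite cats0 => ->; apply: FG_inj.
Qed.

Lemma selt_seval s : selt s = seval [:: (s, false)].
Proof.
apply: FG_inj; case: s => [[[i j] b] hij] /=.
have hji : j != i by rewrite eq_sym.
case: b hij => hij; rewrite /selt /=.
all: do 4 (rewrite /push /flip /wflip /sconj /smid /=; rewrite ?letter_eqF //=).
Qed.

Lemma seval_flip s : seval [:: (s, true)] = finv (selt s).
Proof. by rewrite selt_seval seval_winv. Qed.

(* Cancellation between the spellings of two consecutive letters of a reduced
   S-word can only remove conjugating letters; the middle letters x_i^e then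
   meet and do not cancel since the S-word is reduced. *)
Lemma spell_reduce_head a w : wreduced (a :: w) ->
  exists r, wreduce (spell (a :: w)) = [:: sconj a, smid a & r].
Proof.
have push2 (x y : letter n) r : y != wflip x -> wpush x (y :: r) = [:: x, y & r].
  by move=> /negbTE /= ->.
elim: w a => [|a2 w IH] a Hred.
  case: a {Hred} => [[[[i j] b] hij] e]; rewrite /sconj /smid /=.
  by rewrite letter_eqF 1?eq_sym //= letter_eqF //; exists [:: (j, ~~ b)].
have [r Er] := IH a2 (wreduced_behead Hred).
rewrite -[spell _]/(spell1 a ++ spell (a2 :: w)) wreduce_cat Er.
move: Hred; rewrite wreduced_cons => /andP [Hne _].
case: a Hne {Er} => [[[[i j] b] hij] e]; case: a2 => [[[[i2 j2] b2] hij2] e2] Hne.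
rewrite /sconj /smid /= /wflip /= negbK.
case: ifP => [/eqP [Ej Eb]|/negbT Hcb].
  subst j2 b2.
  case: ((i2, e2) =P (i, ~~ e)) => [[Ei Ee]|Hm].
    subst i2 e2; case/negP: Hne; apply/eqP; congr (_, _); exact: val_inj.
  rewrite (push2 (smid _)); last exact/eqP.
  by rewrite (push2 (sconj _)) ?letter_eqF //; exists [:: (i2, e2) & r].
rewrite (push2 (smid _)) ?letter_eqF 1?eq_sym //.
by rewrite (push2 (sconj _)) ?letter_eqF //; exists [:: (j, ~~ b), (j2, b2), (i2, e2) & r].
Qed.

Lemma seval_inj u v : wreduced u -> wreduced v -> seval u = seval v -> u = v.
Proof.
move=> Hu Hv /(congr1 sval) /=; rewrite !reduceE.
elim: u v Hu Hv => [|a u IH] [|b v] Hu Hv //.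
- by have [r ->] := spell_reduce_head Hv.
- by have [r ->] := spell_reduce_head Hu.
move=> E; have Eab : a = b.
  have [r1 E1] := spell_reduce_head Hu; have [r2 E2] := spell_reduce_head Hv.
  move: E; rewrite E1 E2 => -[].
  case: a {Hu E1} => [[[[i j] c] hij] e]; case: b {Hv E2} => [[[[i2 j2] c2] hij2] e2].
  rewrite /sconj /smid /= => Ej Ec Ei Ee _.
  by congr (_, _) => //; apply: val_inj; rewrite /= Ej Ec Ei.
subst b; congr (_ :: _); apply: IH; [exact: wreduced_behead Hu|exact: wreduced_behead Hv|].
move: E; rewrite -![spell (a :: _)]/(spell1 a ++ spell _) !wreduce_cat /=.
have R1 := wreduced_reduce (spell u); have R2 := wreduced_reduce (spell v).
move/(wpush_inj (wreduced_push _ (wreduced_push _ R1)) (wreduced_push _ (wreduced_push _ R2))).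
by move/(wpush_inj (wreduced_push _ R1) (wreduced_push _ R2))/(wpush_inj R1 R2).
Qed.

Lemma selt_inj : injective (@selt n).
Proof. by move=> s t; rewrite !selt_seval => /seval_inj-/(_ isT isT) [->]. Qed.

End FreeBasis.

Definition avoids n (s : sidx n) : pred (sidx n * bool) := fun a => a.1 != s.

Section Generation.

Variable n : nat.
Implicit Types (s t : sidx n) (P : pred (sidx n * bool)) (A : FG n -> Prop).

Lemma gen_seval P A : (forall a, P a -> P (wflip a)) ->
  (forall x, A x -> exists2 s, x = selt s & P (s, false)) ->
  forall x, gen A x -> exists w, [/\ wreduced w, all P w & x = seval w].
Proof.
move=> Pflip AP x; elim=> {x}.
- move=> x /AP [s -> Ps]; exists [:: (s, false)].
  by rewrite /= Ps selt_seval.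
- by exists [::]; rewrite seval_nil.
- move=> x y _ [u [_ Pu ->]] _ [v [_ Pv ->]].
  exists (wreduce (u ++ v)); rewrite wreduced_reduce seval_reduce seval_cat.
  by rewrite all_wreduce // all_cat Pu.
- move=> x _ [u [_ Pu ->]].
  exists (wreduce (winv u)); rewrite wreduced_reduce seval_reduce seval_winv.
  by rewrite all_wreduce // /winv all_rev all_map; apply: sub_all Pu => a /Pflip.
Qed.

Lemma seval_gen P A : (forall a, P a -> A (selt a.1)) ->
  forall w, all P w -> gen A (seval w).
Proof.
move=> PA; elim=> [_|a w IH] /=; first by rewrite seval_nil; apply: gen_one.
case/andP=> Pa /IH Aw; rewrite -cat1s seval_cat; apply: gen_mul => //.
case: a Pa => s [] /PA As; rewrite ?seval_flip -?selt_seval.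
  exact/gen_inv/gen_in.
exact: gen_in.
Qed.

Lemma Ggrp_seval x : Ggrp x -> exists2 w, wreduced w & x = @seval n w.
Proof.
move=> Gx; have [|w [Rw _ ->]] := @gen_seval predT _ (fun _ _ => isT) _ x Gx.
  by move=> _ [s ->]; exists s.
by exists w.
Qed.

Lemma Gsub_seval s x : Gsub s x ->
  exists w, [/\ wreduced w, all (@avoids n s) w & x = seval w].
Proof.
apply: gen_seval => // _ [[t ->] ts]; exists t => //.
by apply/eqP => /= Et; apply: ts; rewrite Et.
Qed.

Lemma seval_Ggrp w : Ggrp (@seval n w).
Proof. by apply: (@seval_gen predT) => [a _|]; [exists a.1|rewrite all_predT]. Qed.

Lemma seval_Gsub s w : all (@avoids n s) w -> Gsub s (seval w).
Proof.
apply: seval_gen => a sa; split; first by exists a.1.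
by move/selt_inj => E; move: sa; rewrite /avoids E eqxx.
Qed.

Lemma Gsub_Ggrp s x : @Gsub n s x -> Ggrp x.
Proof. by apply: gen_subset => y [Sy _]; apply: gen_in. Qed.

End Generation.

Lemma all_take_find (T : Type) (p : pred T) (w : seq T) :
  all (predC p) (take (find p w) w).
Proof. by elim: w => //= a w IH; case: ifP => //= ->. Qed.

(* When b = p q with p in G_i and q in G_s, the reduced S-word of b is a
   G_i-word followed by a G_s-word, so its prefix before the first letter of
   type i absorbs p. *)
Lemma Gsub_common_shift n (i : sidx n) (P : sidx n -> Prop) b : Ggrp b ->
  (forall s, P s -> exists p q, [/\ Gsub i p, Gsub s q & b = fmul p q]) ->
  exists2 u, Gsub i u & forall s, P s -> Gsub s (fmul u b).
Proof.
move=> /Ggrp_seval [w Rw ->] Pfact.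
pose k := find (fun a : sidx n * bool => a.1 == i) w.
exists (finv (seval (take k w))); first by apply/gen_inv/seval_Gsub/all_take_find.
move=> s /Pfact [_ [_ [/Gsub_seval [wp [_ Ap ->]] /Gsub_seval [wq [_ Aq ->]] E]]].
rewrite -{2}(cat_take_drop k w) seval_cat fmulKg; apply: seval_Gsub.
move: E; rewrite -seval_cat -[seval (wp ++ wq)]seval_reduce wreduce_cat.
have [p1 [q1 [D A1 A2]]] := foldr_wpush_split Ap (all_wreduce Aq).
rewrite D => E; have Ew : w = p1 ++ q1.
  by apply: seval_inj E => //; rewrite -D wreduced_foldr ?wreduced_reduce.
have -> : k = size p1 + find (fun a : sidx n * bool => a.1 == i) q1.
  rewrite /k Ew find_cat; case: hasP => // -[a a_p1 /eqP ai].
  by move/allP/(_ a a_p1): A1; rewrite /avoids ai eqxx.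
rewrite Ew drop_cat ltnNge leq_addr /= addKn.
by apply/allP => a /mem_drop; apply: (allP A2).
Qed.

Section CosetGeometry.

Variable n : nat.

Local Notation X := (@coset_elt n (sidx n) (@Ggrp n) (@Gsub n)).
Local Notation typ := (@ctyp n (sidx n) (@Ggrp n) (@Gsub n)).
Local Notation inc := (@cinc n (sidx n) (@Ggrp n) (@Gsub n)).

Implicit Types (x y z : X) (F : X -> Prop) (g : FG n).

Lemma celt_eq x y : typ x = typ y -> ccos x = ccos y -> x = y.
Proof.
case: x y => [[t C] Hx] [[t' C'] Hy]; rewrite /ctyp /ccos /= => Et EC.
by subst t' C'; congr exist; apply: proof_irrelevance.
Qed.

Definition celt (t : sidx n) g (Gg : Ggrp g) : X :=
  exist _ (t, rcoset (Gsub t) g) (ex_intro _ g (conj Gg erefl)).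

Lemma celt_rep x : exists2 g, Ggrp g & ccos x = rcoset (Gsub (typ x)) g.
Proof. by case: x => [[t C] [g [Gg E]]]; exists g. Qed.

Lemma cinc_sym x y : inc x y -> inc y x.
Proof. by case=> tx [z [xz yz]]; split; [move/esym|exists z]. Qed.

Definition chamber_at g x : Prop := ccos x = rcoset (Gsub (typ x)) g.
Definition based_at F g := forall x, F x -> chamber_at g x.

Lemma chamber_at_flag g : is_flag inc (chamber_at g).
Proof.
move=> x y Ex Ey xy; split; first by move=> E; apply: xy; apply: celt_eq; rewrite // Ex Ey E.
by exists g; rewrite Ex Ey; split; apply: rcoset_self.
Qed.

(* Incidence of xi = G_i a with each G_s g puts a g^-1 in G_i G_s; one u in
   G_i then works for all these s, and u a is a common representative. *)
Lemma flag_based_cons F (l : seq (sidx n)) xi g : is_flag inc F -> F xi -> Ggrp g ->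
  based_at (fun x => F x /\ typ x \in l) g ->
  exists2 g', Ggrp g' & based_at (fun x => F x /\ typ x \in typ xi :: l) g'.
Proof.
move=> flagF Fxi Gg Fg; set i := typ xi.
have [a Ga Ea] := celt_rep xi.
pose P s := exists y, [/\ F y, typ y = s, s \in l & s <> i].
have Gag : Ggrp (fmul a (finv g)) by apply/gen_mul/gen_inv.
have [u Gu uP] : exists2 u, Gsub i u & forall s, P s -> Gsub s (fmul u (fmul a (finv g))).
  apply: Gsub_common_shift => // s [y [Fy <- yl ys]].
  have [_ [z []]] := flagF _ _ Fxi Fy (fun E => ys (congr1 _ (esym E))).
  rewrite Ea Fg // => -[p [Gp ->]] [q [Gq E]].
  exists (finv p), q; split=> //; first exact: gen_inv.
  by apply: (@fmulI _ p); rewrite fmulKVg -fmulA E fmulgK.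
exists (fmul u a); first by apply: gen_mul => //; apply: Gsub_Ggrp Gu.
move=> x [Fx]; case: (typ x =P i) => [xi_t _|xi_t].
  have -> : x = xi.
    by apply: NNPP => /(flagF _ _ Fx Fxi) [[]].
  by rewrite /chamber_at Ea rcosetMl.
rewrite in_cons => /orP [/eqP //|xl].
rewrite /chamber_at Fg // -(@rcosetMl _ _ (fmul u (fmul a (finv g)))).
  by rewrite fmulA fmulgKV.
by apply: uP; exists x.
Qed.

Lemma flag_based F : is_flag inc F -> exists2 g, Ggrp g & based_at F g.
Proof.
move=> flagF.
suff [g Gg Fg] : exists2 g, Ggrp g & based_at (fun x => F x /\ typ x \in enum {: sidx n}) g.
  by exists g => // x Fx; apply: Fg; rewrite mem_enum.
elim: (enum _) => [|i l [g Gg Fg]]; first by exists (fone n) => [|x []//]; apply: gen_one.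
have [[xi [Fxi <-]]|no_i] := classic (exists xi, F xi /\ typ xi = i).
  exact: flag_based_cons Fg.
exists g => // x [Fx]; rewrite in_cons => /orP [/eqP xi|xl]; last exact: Fg.
by case: no_i; exists x.
Qed.

Lemma coset_geometry : is_geometry typ inc.
Proof.
move=> F /flag_based [g Gg Fg]; exists (chamber_at g); split=> //.
by split; [apply: chamber_at_flag|move=> i; exists (celt i Gg)].
Qed.

Lemma coset_flag_transitive : flag_transitive (@Ggrp n) (@Gsub n).
Proof.
move=> F1 F2 /flag_based [g1 Gg1 F1g] /flag_based [g2 Gg2 F2g] _.
exists (fmul (finv g1) g2); split; first by apply: gen_mul => //; apply: gen_inv.
by move=> x y F1x F2y xy; rewrite (F1g x) // (F2g y) // xy rshift_rcoset fmulKVg.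
Qed.

Definition res_inc F x y : Prop := residue inc F x /\ residue inc F y /\ inc x y.

Section Residue.

Variables (F : X -> Prop) (g : FG n).
Hypotheses (flagF : is_flag inc F) (Gg : Ggrp g) (Fg : based_at F g).

Definition free_type (t : sidx n) : Prop := ~ ftypes typ F t.
Definition free_word (w : seq (sidx n * bool)) : Prop := forall a, a \in w -> free_type a.1.

Local Notation res_conn := (clos_refl_trans X (res_inc F)).

Lemma free_word_Gsub w : free_word w -> forall y, F y -> Gsub (typ y) (seval w).
Proof.
move=> freew y Fy; apply/seval_Gsub/allP => a aw; apply/eqP => ay.
by apply: (freew a aw); exists y; rewrite ay.
Qed.

Lemma residue_chamber_at w z : free_word w -> free_type (typ z) ->
  chamber_at (fmul (seval w) g) z -> residue inc F z.
Proof.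
move=> freew freez zwg; split=> [Fz|y Fy]; first by apply: freez; exists z.
split=> [zy|]; first by apply: freez; exists y; rewrite zy.
exists (fmul (seval w) g); rewrite zwg (Fg Fy); split; first exact: rcoset_self.
by exists (seval w); split=> //; apply: free_word_Gsub.
Qed.

Lemma res_conn_chamber_at w z1 z2 : free_word w -> free_type (typ z1) -> free_type (typ z2) ->
  chamber_at (fmul (seval w) g) z1 -> chamber_at (fmul (seval w) g) z2 -> res_conn z1 z2.
Proof.
move=> freew free1 free2 E1 E2; case: (typ z1 =P typ z2) => [Et|t12].
  by rewrite (@celt_eq z1 z2) ?E1 ?E2 ?Et //; apply: rt_refl.
apply: rt_step; split; first exact: residue_chamber_at E1.
split; first exact: residue_chamber_at E2.
by split=> //; exists (fmul (seval w) g); rewrite E1 E2; split; apply: rcoset_self.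
Qed.

(* Walking along the S-word w: the coset of type t' at [seval (a :: w) * g]
   also contains [seval w * g] as soon as t' differs from the type of the
   letter a, and two free types leave room to choose such a t'. *)
Lemma res_conn_word (i j : sidx n) : i <> j -> free_type i -> free_type j ->
  forall w z, free_word w -> free_type (typ z) ->
  chamber_at (fmul (seval w) g) z -> res_conn z (celt i Gg).
Proof.
move=> ij freei freej; elim=> [|a w IH] z freew freez zwg.
  by apply: (res_conn_chamber_at (w := [::])) => //; rewrite /chamber_at /= seval_nil fmul1g.
have [t' [freet' at']] : exists t', free_type t' /\ a.1 != t'.
  case: (i =P a.1) => [ai|]; last by exists i; split=> //; apply/eqP/nesym.
  by exists j; split=> //; apply/eqP => aj; apply: ij; rewrite ai aj.
have freew' : free_word w by move=> b bw; apply: freew; rewrite in_cons bw orbT.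
have Gawg : Ggrp (fmul (seval (a :: w)) g) by apply: gen_mul => //; apply: seval_Ggrp.
apply: (@rt_trans _ _ _ (celt t' Gawg)); first exact: (res_conn_chamber_at freew).
apply: IH => //.
change (rcoset (Gsub t') (fmul (seval ([:: a] ++ w)) g) = rcoset (Gsub t') (fmul (seval w) g)).
rewrite seval_cat fmulA rcosetMl //.
by apply: seval_Gsub; rewrite /= /avoids at'.
Qed.

(* z and F lie in a common chamber, based at some g'; then g' g^-1 lies in
   every G_(typ y), y in F, so its reduced S-word only uses free types. *)
Lemma residue_word z : residue inc F z ->
  exists2 w, free_word w & chamber_at (fmul (seval w) g) z.
Proof.
move=> [Fz zF].
have flagFz : is_flag inc (fun u => F u \/ u = z).
  move=> a b [Fa|->] [Fb|->] ab; [exact: flagF|exact/cinc_sym/zF|exact: zF|by case: ab].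
have [g' Gg' Fzg'] := flag_based flagFz.
have [w Rw Ew] := Ggrp_seval (gen_mul Gg' (gen_inv Gg)).
exists w; last by rewrite -Ew fmulgKV; apply: Fzg'; right.
move=> a aw [y [Fy ya]].
have : Gsub (typ y) (fmul g' (finv g)).
  by apply: eq_rcoset; rewrite -(Fzg' y (or_introl Fy)) -(Fg Fy).
case/Gsub_seval => w' [Rw' Aw' Ew'].
have ww' : w' = w by apply: seval_inj; rewrite // -Ew -Ew'.
by rewrite ww' in Aw'; move/allP/(_ a aw): Aw'; rewrite /avoids ya eqxx.
Qed.

End Residue.

Lemma clos_rt_sym (T : Type) (R : T -> T -> Prop) : (forall a b, R a b -> R b a) ->
  forall a b, clos_refl_trans T R a b -> clos_refl_trans T R b a.
Proof.
move=> Rsym a b; elim=> {a b} [a b /Rsym|a|a b c _ ba _ cb]; last exact: rt_trans cb ba.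
  exact: rt_step.
exact: rt_refl.
Qed.

Lemma coset_residually_connected : residually_connected typ inc.
Proof.
move=> F flagF [i [j [ij [freei freej]]]] x y Rx Ry.
have [g Gg Fg] := flag_based flagF.
have conn z : residue inc F z -> clos_refl_trans X (res_inc F) z (celt i Gg).
  move=> Rz; have [w freew zwg] := residue_word flagF Gg Fg Rz.
  apply: (res_conn_word Gg Fg ij freei freej freew _ zwg).
  by move=> [y' [Fy' y'z]]; case: (Rz.2 y' Fy'); rewrite y'z.
have sym_res a b : res_inc F a b -> res_inc F b a by case=> Ra [Rb /cinc_sym].
exact: rt_trans (conn x Rx) (clos_rt_sym sym_res (conn y Ry)).
Qed.

End CosetGeometry.

Section Automorphisms.

Variable n : nat.
Implicit Types (phi psi : FG n -> FG n) (f : 'I_n -> FG n) (s : sidx n).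

Definition fmorph phi := forall u v, phi (fmul u v) = fmul (phi u) (phi v).

Lemma fmorph1 phi : fmorph phi -> phi (fone n) = fone n.
Proof. by move=> Mphi; apply: (@fmulI _ (phi (fone n))); rewrite -Mphi !fmulg1. Qed.

Lemma fmorphV phi : fmorph phi -> forall u, phi (finv u) = finv (phi u).
Proof. by move=> Mphi u; apply/esym/finv_unique; rewrite -Mphi fmulgV fmorph1. Qed.

Definition ext_letter f (a : letter n) : FG n := if a.2 then finv (f a.1) else f a.1.
Definition ext_word f (l : seq (letter n)) : FG n :=
  foldr (fun a acc => fmul (ext_letter f a) acc) (fone n) l.

Lemma ext_word_cat f u v : ext_word f (u ++ v) = fmul (ext_word f u) (ext_word f v).
Proof. by elim: u => [|a u IH] /=; rewrite ?fmul1g // IH fmulA. Qed.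

Lemma ext_word_reduce f l : ext_word f (wreduce l) = ext_word f l.
Proof.
elim: l => //= a l <-; rewrite -/(wreduce l).
case: (wreduce l) => [|b s] //=; case: ifP => // /eqP ->.
suff aK : fmul (ext_letter f a) (ext_letter f (wflip a)) = fone n.
  by rewrite -fmulA aK fmul1g.
by case: a => k [] /=; rewrite /ext_letter /= ?finvK ?fmulVg ?fmulgV.
Qed.

Lemma ext_morph f : fmorph (ext f).
Proof. by move=> u v; rewrite /ext /= reduceE -/(ext_word _ _) ext_word_reduce ext_word_cat. Qed.

Lemma ext_gx f k : ext f (gx k) = f k.
Proof. by rewrite /ext /= /ext_letter /= fmulg1. Qed.

Lemma ext_word_gx (w : FG n) : ext_word (@gx n) (sval w) = w.
Proof.
suff ext_red l : ext_word (@gx n) l = exist _ (reduce l) (reduce_reduced l).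
  by apply: FG_inj; rewrite ext_red /= reduceE wreduce_id // FG_reduced.
elim: l => [|a l IH]; first exact: FG_inj.
rewrite /= IH; apply: FG_inj => /=.
by case: a => k []; rewrite /ext_letter reduceE wreduce_cat /= (wreduce_id (wreduced_reduce l)).
Qed.

Lemma fmorph_ext_word phi f l : fmorph phi -> phi (ext_word f l) = ext_word (phi \o f) l.
Proof.
move=> Mphi; elim: l => [|a l IH] /=; first exact: fmorph1.
by rewrite Mphi IH /ext_letter /=; case: a.2; rewrite ?fmorphV.
Qed.

Lemma fmorph_eq_gx phi psi : fmorph phi -> fmorph psi ->
  (forall k, phi (gx k) = psi (gx k)) -> phi =1 psi.
Proof.
move=> Mphi Mpsi E w; rewrite -(ext_word_gx w) !fmorph_ext_word //.
by congr ext_word; apply: functional_extensionality => k /=.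
Qed.

Lemma fmorph_id_gx phi : fmorph phi -> (forall k, phi (gx k) = gx k) -> phi =1 id.
Proof. by move=> Mphi; apply: fmorph_eq_gx. Qed.

Lemma fmorph_selt phi s : fmorph phi ->
  phi (selt s) = let: (i, j, b) := sval s in
    if b then fmul (finv (phi (gx j))) (fmul (phi (gx i)) (phi (gx j)))
    else fmul (phi (gx j)) (fmul (phi (gx i)) (finv (phi (gx j)))).
Proof.
move=> Mphi; case: s => [[[i j] b] ij] /=; rewrite /selt /=.
by case: b ij => ij; rewrite !Mphi !(fmorphV Mphi).
Qed.

Definition signed_perm phi (pi : {perm sidx n}) :=
  forall s, phi (selt s) = selt (pi s) \/ phi (selt s) = finv (selt (pi s)).

Definition S_aut phi :=
  [/\ fmorph phi, bijective phi & exists pi, signed_perm phi pi].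

Lemma fmorph_can phi psi : fmorph phi -> cancel phi psi -> cancel psi phi -> fmorph psi.
Proof. by move=> Mphi phiK psiK u v; rewrite -{1}(psiK u) -{1}(psiK v) -Mphi phiK. Qed.

Lemma signed_perm_can phi psi pi : fmorph psi -> cancel phi psi ->
  signed_perm phi pi -> signed_perm psi pi^-1.
Proof.
move=> Mpsi phiK phiS s; case: (phiS (pi^-1 s)%g); rewrite permKV => E.
  by left; rewrite -E phiK.
by right; rewrite -[selt s]finvK -E (fmorphV Mpsi) phiK.
Qed.

End Automorphisms.

Section GeneratorsOfK.

Variable n : nat.
Implicit Types (phi psi : FG n -> FG n) (sg : 'I_n -> 'I_n).

Lemma sidx_map_subproof sg (sg_inj : injective sg) (s : sidx n) :
  sg (sval s).1.1 != sg (sval s).1.2.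
Proof. by rewrite (inj_eq sg_inj) (svalP s). Qed.

Definition sidx_map sg (sg_inj : injective sg) (s : sidx n) : sidx n :=
  exist (fun p : 'I_n * 'I_n * bool => p.1.1 != p.1.2)
    (sg (sval s).1.1, sg (sval s).1.2, (sval s).2) (sidx_map_subproof sg_inj s).

Lemma sidx_map_inj sg (sg_inj : injective sg) : injective (sidx_map sg_inj).
Proof.
move=> [[[i j] b] ij] [[[i' j'] b'] ij'] /(congr1 sval) [/sg_inj Ei /sg_inj Ej Eb].
by subst; congr exist; apply: bool_irrelevance.
Qed.

Lemma S_aut_relabel phi psi sg (sg_inj : injective sg) : fmorph phi -> fmorph psi ->
  (forall k, phi (gx k) = gx (sg k)) ->
  (forall k, phi (psi (gx k)) = gx k) -> (forall k, psi (phi (gx k)) = gx k) -> S_aut phi.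
Proof.
move=> Mphi Mpsi phi_gx phiK psiK; split=> //.
  exists psi => u.
    by apply: (@fmorph_id_gx n (psi \o phi)) => // a b /=; rewrite Mphi Mpsi.
  by apply: (@fmorph_id_gx n (phi \o psi)) => // a b /=; rewrite Mpsi Mphi.
exists (perm (@sidx_map_inj sg sg_inj)) => -[[[i j] b] ij]; left.
by rewrite permE fmorph_selt //= !phi_gx; case: b ij.
Qed.

Lemma xgenE (i : 'I_n) : xgen n (val i) = gx i.
Proof. by rewrite /xgen valK. Qed.

Lemma S_aut_phirho : S_aut (@phirho n).
Proof.
have rho_gx (k : 'I_n) : phirho (gx k) = gx (ordS k).
  by rewrite /phirho ext_gx -[_ %% n]/(val (ordS k)) xgenE.
pose psi := @ext n (fun k => gx (ord_pred k)).
have psi_gx (k : 'I_n) : psi (gx k) = gx (ord_pred k) by apply: ext_gx.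
apply: (@S_aut_relabel (@phirho n) psi _ (@ordS_inj n) (ext_morph _) (ext_morph _) rho_gx) => k.
  by rewrite psi_gx rho_gx ord_predK.
by rewrite rho_gx psi_gx ordSK.
Qed.

Definition swap01 (m : nat) := if m == 0 then 1 else if m == 1 then 0 else m.

Lemma swap01K : involutive swap01.
Proof. by case=> [|[|m]]. Qed.

Lemma swap01_lt (hn : 1 < n) (k : 'I_n) : swap01 k < n.
Proof. by rewrite /swap01; do 2?case: ifP => _ //; apply: ltnW. Qed.

Lemma S_aut_phitau (hn : 1 < n) : S_aut (@phitau n).
Proof.
pose tau (k : 'I_n) := Ordinal (swap01_lt hn k).
have tauK : involutive tau by move=> k; apply: val_inj; rewrite /= swap01K.
have tau_gx (k : 'I_n) : phitau (gx k) = gx (tau k).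
  by rewrite /phitau ext_gx -[if _ then _ else _]/(val (tau k)) xgenE.
have tauKK (k : 'I_n) : phitau (phitau (gx k)) = gx k by rewrite !tau_gx tauK.
exact: (@S_aut_relabel (@phitau n) (@phitau n) _ (inv_inj tauK)
  (ext_morph _) (ext_morph _) tau_gx tauKK tauKK).
Qed.

(* phi_1 turns a conjugate by x_1^{+-1} into the conjugate by x_1^{-+1}, and a
   conjugate of x_1 into the inverse of the same conjugate. *)
Definition sidx_sign (s : sidx n) : sidx n :=
  exist (fun p : 'I_n * 'I_n * bool => p.1.1 != p.1.2)
    ((sval s).1.1, (sval s).1.2, (sval s).2 (+) (val (sval s).1.2 == 0)) (svalP s).

Lemma sidx_signK : involutive sidx_sign.
Proof. by move=> [[[i j] b] ij]; apply: val_inj; rewrite /= -addbA addbb addbF. Qed.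

Lemma S_aut_phi1 : S_aut (@phi1 n).
Proof.
have phi1_gx (k : 'I_n) : phi1 (gx k) = if val k == 0 then finv (gx k) else gx k.
  exact: ext_gx.
have M1 : fmorph (@phi1 n) := @ext_morph _ _.
have phi1K : involutive (@phi1 n).
  have M11 : fmorph (@phi1 n \o @phi1 n) by move=> a b /=; rewrite !M1.
  apply: (fmorph_id_gx M11) => k /=.
  by rewrite phi1_gx; case: ifP => k0; rewrite ?(fmorphV M1) phi1_gx k0 ?finvK.
split=> //; first by exists (@phi1 n).
exists (perm (inv_inj sidx_signK)) => -[[[i j] b] ij]; rewrite permE fmorph_selt //=.
rewrite !phi1_gx /sidx_sign /selt /=.
case: (boolP (val j == 0)) => j0.
  have -> : (val i == 0) = false.
    by apply: contraNF ij => /eqP i0; apply/eqP/val_inj; rewrite i0; apply/esym/eqP.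
  by left; case: b {ij}; rewrite /= finvK.
case: (boolP (val i == 0)) => i0; last by left; rewrite /= !addbF.
by right; rewrite /= !addbF; case: b {ij}; rewrite !finvM ?finvK fmulA.
Qed.

Lemma S_aut_comp phi psi : S_aut phi -> S_aut psi -> S_aut (phi \o psi).
Proof.
move=> [Mphi bphi [pi Epi]] [Mpsi bpsi [rho Erho]].
split; [by move=> u v /=; rewrite Mpsi Mphi|exact: bij_comp|].
exists (rho * pi)%g => s /=; rewrite permM.
case: (Erho s) => ->; case: (Epi (rho s)) => E.
all: rewrite ?(fmorphV Mphi) E ?finvK; by [left|right].
Qed.

Lemma S_aut_inv phi psi : S_aut phi -> cancel phi psi -> cancel psi phi -> S_aut psi.
Proof.
move=> [Mphi _ [pi phiS]] phiK psiK; have Mpsi := fmorph_can Mphi phiK psiK.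
by split=> //; [exists phi|exists pi^-1%g; apply: signed_perm_can].
Qed.

Lemma Kgrp_S_aut (hn : 1 < n) phi : @Kgrp n phi -> S_aut phi.
Proof.
elim=> {phi}.
- exact: S_aut_phi1.
- exact: S_aut_phirho.
- exact: S_aut_phitau.
- by split=> //; [exists id|exists 1%g => s; left; rewrite perm1].
- by move=> f g _ Sf _ Sg; apply: S_aut_comp.
- by move=> f g _ Sf; apply: S_aut_inv.
Qed.

End GeneratorsOfK.

Section Images.

Variable n : nat.
Implicit Types (phi psi : FG n -> FG n) (A B H : FG n -> Prop).

Lemma fimg_gen phi A B : fmorph phi ->
  (forall x, A x -> gen B (phi x)) -> (forall y, B y -> gen (fimg phi A) y) ->
  fimg phi (gen A) = gen B.
Proof.
move=> Mphi AB BA; apply: functional_extensionality => y; apply: propositional_extensionality.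
split=> [[x [Ax ->]]|By].
  elim: Ax => {x} [x /AB //| |x z _ Bx _ Bz|x _ Bx].
  - by rewrite fmorph1 //; apply: gen_one.
  - by rewrite Mphi; apply: gen_mul.
  - by rewrite fmorphV //; apply: gen_inv.
elim: (gen_subset BA By) => {y By}
  [y [x [Ax ->]]| |_ _ _ [x [Ax ->]] _ [x' [Ax' ->]]|_ _ [x [Ax ->]]].
- by exists x; split=> //; apply: gen_in.
- by exists (fone n); split; [apply: gen_one|rewrite fmorph1].
- by exists (fmul x x'); split; [apply: gen_mul|rewrite Mphi].
- by exists (finv x); split; [apply: gen_inv|rewrite fmorphV].
Qed.

Lemma fimg_rcoset phi H g : fmorph phi -> fimg phi (rcoset H g) = rcoset (fimg phi H) (phi g).
Proof.
move=> Mphi; apply: functional_extensionality => y; apply: propositional_extensionality.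
split=> [[_ [[h [Hh ->]] ->]]|[_ [[h [Hh ->]] ->]]].
  by exists (phi h); split; [exists h|rewrite Mphi].
by exists (fmul h g); split; [exists h|rewrite Mphi].
Qed.

Lemma fimgK phi psi : cancel phi psi -> forall A, fimg psi (fimg phi A) = A.
Proof.
move=> phiK A; apply: functional_extensionality => y; apply: propositional_extensionality.
split=> [[_ [[x [Ax ->]] ->]]|Ay]; first by rewrite phiK.
by exists (phi y); split; [exists y|rewrite phiK].
Qed.

Section SignedPerm.

Variables (phi : FG n -> FG n) (pi : {perm sidx n}).
Hypotheses (Mphi : fmorph phi) (phiS : signed_perm phi pi).

Lemma gen_phi_selt B s : B (selt (pi s)) -> gen B (phi (selt s)).
Proof. by move=> Bs; case: (phiS s) => ->; [|apply: gen_inv]; apply: gen_in. Qed.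

Lemma gen_fimg_selt A s : A (selt (pi^-1 s)%g) -> gen (fimg phi A) (selt s).
Proof.
move=> As; case: (phiS (pi^-1 s)%g); rewrite permKV => E.
  by apply: gen_in; exists (selt (pi^-1 s)%g).
by apply: gen_invE; apply: gen_in; exists (selt (pi^-1 s)%g); rewrite E.
Qed.

Lemma fimg_Ggrp : fimg phi (@Ggrp n) = @Ggrp n.
Proof.
apply: fimg_gen => // [_ [s ->]|_ [s ->]].
  by apply: gen_phi_selt; exists (pi s).
by apply: gen_fimg_selt; exists (pi^-1 s)%g.
Qed.

Lemma fimg_Gsub s : fimg phi (Gsub s) = Gsub (pi s).
Proof.
apply: fimg_gen => // [_ [[t ->] ts]|_ [[u ->] us]].
  apply: gen_phi_selt; split; first by exists (pi t).
  by move/selt_inj/perm_inj => Ets; apply: ts; rewrite Ets.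
apply: gen_fimg_selt; split; first by exists (pi^-1 u)%g.
by move/selt_inj => Eu; apply: us; rewrite -Eu permKV.
Qed.

End SignedPerm.

End Images.

Section CosetImage.

Variable n : nat.

Local Notation X := (@coset_elt n (sidx n) (@Ggrp n) (@Gsub n)).
Local Notation typ := (@ctyp n (sidx n) (@Ggrp n) (@Gsub n)).
Local Notation inc := (@cinc n (sidx n) (@Ggrp n) (@Gsub n)).

Lemma coset_image_subproof phi pi (Mphi : fmorph phi) (phiS : signed_perm phi pi) (x : X) :
  exists g, Ggrp g /\ fimg phi (ccos x) = rcoset (Gsub (pi (typ x))) g.
Proof.
have [g Gg ->] := celt_rep x; exists (phi g); split.
  by rewrite -(fimg_Ggrp Mphi phiS); exists g.
by rewrite fimg_rcoset // (fimg_Gsub Mphi phiS).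
Qed.

Definition coset_image phi pi (Mphi : fmorph phi) (phiS : signed_perm phi pi) (x : X) : X :=
  exist _ (pi (typ x), fimg phi (ccos x)) (coset_image_subproof Mphi phiS x).

Lemma typ_coset_image phi pi Mphi phiS x :
  typ (@coset_image phi pi Mphi phiS x) = pi (typ x).
Proof. by []. Qed.

Lemma ccos_coset_image phi pi Mphi phiS x :
  ccos (@coset_image phi pi Mphi phiS x) = fimg phi (ccos x).
Proof. by []. Qed.

Variables (phi psi : FG n -> FG n) (pi : {perm sidx n}).
Hypotheses (Mphi : fmorph phi) (phiK : cancel phi psi) (psiK : cancel psi phi).
Hypothesis phiS : signed_perm phi pi.

Let Mpsi := fmorph_can Mphi phiK psiK.
Let psiS := signed_perm_can Mpsi phiK phiS.

Lemma coset_imageK : cancel (coset_image Mphi phiS) (coset_image Mpsi psiS).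
Proof. by move=> x; apply: celt_eq; rewrite /ctyp /ccos /= ?permK ?fimgK. Qed.

Lemma coset_imageKV : cancel (coset_image Mpsi psiS) (coset_image Mphi phiS).
Proof. by move=> x; apply: celt_eq; rewrite /ctyp /ccos /= ?permKV ?fimgK. Qed.

Lemma coset_image_correlation : is_correlation typ inc (coset_image Mphi phiS).
Proof.
split; first by exists (coset_image Mpsi psiS); [apply: coset_imageK|apply: coset_imageKV].
split=> x y; rewrite /cinc !typ_coset_image; first by split=> [->|/perm_inj].
rewrite !ccos_coset_image; split=> -[xy [z [xz yz]]].
  by split=> [/perm_inj|]; last by exists (phi z); split; exists z.
case: xz yz => a [xa ->] [b [yb /(can_inj phiK) ab]].
split=> [E|]; first by apply: xy; rewrite E.
by exists a; rewrite {2}ab.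
Qed.

End CosetImage.

Theorem mainTheorem9 (n : nat) (hn : 2 <= n) :
  let G := @Ggrp n in
  let Gs := @Gsub n in
  is_geometry (@ctyp n (sidx n) G Gs) (@cinc n (sidx n) G Gs)
  /\ residually_connected (@ctyp n (sidx n) G Gs) (@cinc n (sidx n) G Gs)
  /\ flag_transitive G Gs
  /\ (forall phi : FG n -> FG n, Kgrp phi ->
        fimg phi G = G
        /\ exists pi : {perm sidx n},
             (forall s, fimg phi (Gs s) = Gs (pi s))
             /\ exists alpha : coset_elt G Gs -> coset_elt G Gs,
                  is_correlation (@ctyp n (sidx n) G Gs) (@cinc n (sidx n) G Gs) alpha
                  /\ forall (x : coset_elt G Gs) (g : FG n),
                       G g -> ccos x = rcoset (Gs (ctyp x)) g ->
                       ctyp (alpha x) = pi (ctyp x)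
                       /\ ccos (alpha x) = rcoset (fimg phi (Gs (ctyp x))) (phi g)).
Proof.
move=> G Gs; split; first exact: coset_geometry.
split; first exact: coset_residually_connected.
split; first exact: coset_flag_transitive.
move=> phi /(Kgrp_S_aut hn) [Mphi [psi phiK psiK] [pi phiS]].
split; first exact: fimg_Ggrp.
exists pi; split; first exact: fimg_Gsub.
exists (coset_image Mphi phiS); split; first exact: coset_image_correlation.
by move=> x g _ xg; rewrite typ_coset_image ccos_coset_image xg fimg_rcoset.
Qed.
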